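(* For every $n\ge 0$, if $B_n$ is the Boolean lattice of subsets of an $n$-element set, then $\mathcal{J}(B_n,t)=(t+1)^n$.
   Context: $B_n$ is ranked by cardinality with $\hat 0=\emptyset$ and $\hat 1$ the whole set, $\mathrm{rk}(B_n)=n$. Let $\delta_3(x,y,z)=1$ if $x=y=z$ and $0$ otherwise, let $J$ be the unique integer-valued function on triples $x\le y\le z$ with $\sum_{x\le a\le y\le b\le z}J(a,y,b)=\delta_3(x,y,z)$ for all $x\le y\le z$, and $\mathcal{J}(\mathcal{P},t)=(-1)^{\mathrm{rk}(\mathcal{P})}\sum_{x\in\mathcal{P}}J(\hat 0,x,\hat 1)\,t^{\mathrm{rk}(\mathcal{P})-\mathrm{rk}(x)}$. *)

From mathcomp Require Import all_boot all_order all_algebra.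
Set Implicit Arguments. Unset Strict Implicit. Unset Printing Implicit Defensive.
Import GRing.Theory.
Local Open Scope ring_scope.

(* The Boolean lattice B_n: subsets of 'I_n ordered by inclusion,
   bottom = set0, top = setT, rank x = #|x|, rk(B_n) = n. *)

Definition delta3 (n : nat) (x y z : {set 'I_n}) : int :=
  if (x == y) && (y == z) then 1 else 0.

Definition isJ (n : nat) (J : {set 'I_n} -> {set 'I_n} -> {set 'I_n} -> int) : Prop :=
  forall x y z : {set 'I_n}, x \subset y -> y \subset z ->
    \sum_(a : {set 'I_n} | (x \subset a) && (a \subset y))
      \sum_(b : {set 'I_n} | (y \subset b) && (b \subset z)) J a y b
    = delta3 x y z.

Definition calJ (n : nat) (J : {set 'I_n} -> {set 'I_n} -> {set 'I_n} -> int) : {poly int} :=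
  (-1) ^+ n * \sum_(x : {set 'I_n}) (J set0 x setT)%:P * 'X^(n - #|x|).

From mathcomp Require Import all_boot all_order all_algebra.
Set Implicit Arguments. Unset Strict Implicit. Unset Printing Implicit Defensive.
Import GRing.Theory.
Local Open Scope ring_scope.

(* The Boolean lattice has Moebius function mu(x, y) = (-1)^(|y| - |x|), i.e.
   (-1)^|x| (-1)^|y|.  Inverting the defining relation of J once in its first
   and once in its third argument forces J(a, y, b) = (-1)^|a| (-1)^|b| for
   every a <= y <= b, and this function does satisfy the relation.  Hence
   J(0, x, 1) = (-1)^n for all x, and the sign in front of the sum cancels:
   calJ(B_n, t) = sum_x t^(n - |x|) = (t + 1)^n. *)

Lemma signr_sqr (R : pzRingType) (k : nat) : (-1) ^+ k * (-1) ^+ k = 1 :> R.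
Proof. by rewrite -expr2 exprAC sqrrN !expr1n. Qed.

Section Intervals.
Variable T : finType.
Implicit Types (lo hi x z a : {set T}) (i : T).

Lemma exchange_interval_sum (R : nmodType) lo hi (F : {set T} -> {set T} -> R) :
  \sum_(x : {set T} | (lo \subset x) && (x \subset hi))
    \sum_(a : {set T} | (x \subset a) && (a \subset hi)) F x a =
  \sum_(a : {set T} | (lo \subset a) && (a \subset hi))
    \sum_(x : {set T} | (lo \subset x) && (x \subset a)) F x a.
Proof.
rewrite (exchange_big_dep (fun a => (lo \subset a) && (a \subset hi))) => [|x a].
  apply: eq_bigr => a /andP[_ ahi]; apply: eq_bigl => x; rewrite ahi andbT -andbA.
  by case: (boolP (x \subset a)) => [xa|]; rewrite ?andbF // (subset_trans xa).
by case/andP=> lox _ /andP[xa ->]; rewrite (subset_trans lox).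
Qed.

Definition toggle i a := if i \in a then a :\ i else i |: a.

Lemma toggleK i : involutive (toggle i).
Proof.
move=> a; rewrite /toggle; case: (boolP (i \in a)) => ia.
  by rewrite setD11 setD1K.
by rewrite setU11 setU1K.
Qed.

Lemma in_toggle i a j : (j \in toggle i a) = if j == i then i \notin a else j \in a.
Proof.
rewrite /toggle; case: (boolP (i \in a)) => ia; case: eqP => [->|/eqP ne];
  by rewrite ?in_setD1 ?in_setU1 ?eqxx ?ia ?(negbTE ne).
Qed.

Lemma sub_toggle i lo a : i \notin lo -> (lo \subset toggle i a) = (lo \subset a).
Proof.
move=> ilo; apply/subsetP/subsetP => sub j jlo; have := sub j jlo;
  by rewrite in_toggle; case: eqP => // ji; move: ilo; rewrite -ji jlo.
Qed.

Lemma toggle_sub i hi a : i \in hi -> (toggle i a \subset hi) = (a \subset hi).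
Proof.
move=> ihi; apply/subsetP/subsetP => sub j.
  by move=> ja; case: (eqVneq j i) => [->//|ne]; apply: sub; rewrite in_toggle (negbTE ne).
by rewrite in_toggle; case: eqP => [->//|_]; apply: sub.
Qed.

Variable R : pzRingType.
Local Notation sgn a := ((-1) ^+ #|a| : R).

Lemma sgn_toggle i a : sgn (toggle i a) = - sgn a.
Proof.
rewrite /toggle; case: (boolP (i \in a)) => ia.
  by rewrite (cardsD1 i a) ia exprS mulN1r opprK.
by rewrite cardsU1 ia exprS mulN1r.
Qed.

(* Toggling an element of [hi :\: lo] pairs the sets of the interval with opposite signs. *)
Lemma sum_sgn_interval lo hi : lo \subset hi ->
  \sum_(a : {set T} | (lo \subset a) && (a \subset hi)) sgn a =
  if lo == hi then sgn lo else 0.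
Proof.
move=> lohi; case: eqP => [<-|/eqP ne].
  by rewrite (big_pred1 lo) // => a; rewrite /= eqEsubset andbC.
have /properP[_ [i ihi ilo]] : lo \proper hi by rewrite properEneq ne.
rewrite (bigID (fun a => i \in a)) /= addrC; apply/eqP; rewrite addr_eq0 -sumrN.
rewrite (reindex_inj (can_inj (toggleK i))) /=; apply/eqP/eq_big => a.
  by rewrite sub_toggle // toggle_sub // in_toggle eqxx negbK.
by rewrite sgn_toggle.
Qed.

Lemma mobius_inversion_up lo hi (f g : {set T} -> R) : lo \subset hi ->
  (forall x, lo \subset x -> x \subset hi ->
     g x = \sum_(a : {set T} | (x \subset a) && (a \subset hi)) f a) ->
  f lo = sgn lo * \sum_(x : {set T} | (lo \subset x) && (x \subset hi)) sgn x * g x.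
Proof.
move=> lohi gE.
under eq_bigr => x /andP[lox xhi] do rewrite gE // mulr_sumr.
rewrite exchange_interval_sum (bigD1 lo) /= ?subxx ?lohi // [X in _ + X]big1 => [|a].
  by rewrite addr0 -mulr_suml sum_sgn_interval ?subxx // eqxx mulrA signr_sqr mul1r.
case/andP=> /andP[loa _] neq.
by rewrite -mulr_suml sum_sgn_interval // eq_sym (negbTE neq) mul0r.
Qed.

Lemma mobius_inversion_down lo hi (f g : {set T} -> R) : lo \subset hi ->
  (forall z, lo \subset z -> z \subset hi ->
     g z = \sum_(b : {set T} | (lo \subset b) && (b \subset z)) f b) ->
  f hi = sgn hi * \sum_(z : {set T} | (lo \subset z) && (z \subset hi)) sgn z * g z.
Proof.
move=> lohi gE.
under eq_bigr => z /andP[loz zhi] do rewrite gE // mulr_sumr.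
rewrite -exchange_interval_sum (bigD1 hi) /= ?subxx ?lohi // [X in _ + X]big1 => [|b].
  by rewrite addr0 -mulr_suml sum_sgn_interval ?subxx // eqxx mulrA signr_sqr mul1r.
case/andP=> /andP[_ bhi] neq.
by rewrite -mulr_suml sum_sgn_interval // (negbTE neq) mul0r.
Qed.

End Intervals.

Lemma sum_expr_card_setC (T : finType) (R : comPzSemiRingType) (r : R) :
  \sum_(A : {set T}) r ^+ (#|T| - #|A|) = (r + 1) ^+ #|T|.
Proof.
transitivity (\prod_(i : T) (1 + r)); last by rewrite prodr_const addrC.
rewrite bigA_distr; apply: eq_bigr => A _.
rewrite -{1}(setCK A) -cardsCs -prodr_const big_mkcond; apply: eq_bigr => i _.
by rewrite !inE; case: (i \in A).
Qed.

Section BooleanLattice.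
Variable n : nat.
Implicit Types (a b x y z : {set 'I_n}).
Local Notation sgn a := ((-1) ^+ #|a| : int).

Lemma isJ_sgn : isJ (fun a (_ : {set 'I_n}) b => sgn a * sgn b).
Proof.
move=> x y z xy yz; under eq_bigr => a _ do rewrite -mulr_sumr.
rewrite -mulr_suml !sum_sgn_interval // /delta3.
by case: eqP => [->|_]; case: eqP => [->|_]; rewrite ?signr_sqr ?mulr0 ?mul0r.
Qed.

Variable J : {set 'I_n} -> {set 'I_n} -> {set 'I_n} -> int.
Hypothesis J_isJ : isJ J.

Lemma isJ_sum_right a y z : a \subset y -> y \subset z ->
  \sum_(b : {set 'I_n} | (y \subset b) && (b \subset z)) J a y b =
  if y == z then sgn a * sgn y else 0.
Proof.
move=> ay yz.
rewrite (@mobius_inversion_up _ _ a y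
  (fun x => \sum_(b : {set 'I_n} | (y \subset b) && (b \subset z)) J x y b)
  (fun x => delta3 x y z)) // => [|x ax xy]; last by rewrite J_isJ.
rewrite (bigD1 y) /= ?subxx ?ay // big1 => [|x /andP[_ /negbTE xy]].
  by rewrite /delta3 eqxx addr0; case: eqP; rewrite ?mulr1 ?mulr0.
by rewrite /delta3 xy mulr0.
Qed.

Lemma isJ_eq_sgn a y b : a \subset y -> y \subset b -> J a y b = sgn a * sgn b.
Proof.
move=> ay yb.
rewrite (@mobius_inversion_down _ _ y b (J a y)
  (fun z => \sum_(c : {set 'I_n} | (y \subset c) && (c \subset z)) J a y c)) //.
under eq_bigr => z /andP[yz _] do rewrite isJ_sum_right //.
rewrite (bigD1 y) /= ?subxx ?yb // big1 => [|z /andP[_ /negbTE zy]].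
  by rewrite eqxx addr0 (mulrCA _ (sgn a)) signr_sqr mulr1 mulrC.
by rewrite eq_sym zy mulr0.
Qed.

End BooleanLattice.

Theorem proposition6p7 (n : nat) :
  (exists J, @isJ n J) /\
  (forall J, @isJ n J -> calJ J = ('X + 1) ^+ n).
Proof.
split; first by eexists; exact: isJ_sgn.
move=> J J_isJ; rewrite /calJ.
under eq_bigr => x _ do rewrite isJ_eq_sgn ?sub0set ?subsetT // cards0 cardsT card_ord mul1r.
rewrite -mulr_sumr mulrA rmorphXn rmorphN1 signr_sqr mul1r.
by have := sum_expr_card_setC 'I_n ('X : {poly int}); rewrite card_ord.
Qed.
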